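(* Let $(X,d_X)$ be a compact geodesic metric space, $r\in X$, $d=d_X(r,\cdot)$, and let $(G,d_G)$ be either the metric Reeb graph of $d$ or the metric $\alpha$-Reeb graph of $d$ (for some $\alpha>0$ and some covering $\mathcal I$), assumed to be a finite graph, with induced function $d_*:G\to\mathbb R_+$. If $\delta$ is a path in $G$ joining two points $p,p'\in G$ such that $d_*\circ\delta$ is strictly increasing, then $\delta$ is a shortest path between $p$ and $p'$ and $d_G(p,p')=d_*(p')-d_*(p)$.
   Context: Reeb graph: for $x,y\in X$ set $x\sim y$ iff $d(x)=d(y)$ and $x,y$ lie in the same path-connected component of $d^{-1}(d(x))$; $G=X/\sim$, with quotient map $\pi:X\to G$. $\alpha$-Reeb graph: given $\alpha>0$ and a covering $\mathcal I=\{I_i\}$ of the range of $d$ by open intervals of length at most $\alpha$, let $\sim_\alpha$ be the transitive closure of the relation ''$d(x)=d(y)$ and $x,y$ lie in the same path-connected component of $d^{-1}(I_i)$ for some $i$''; $G=X/\sim_\alpha$ with quotient map $\pi$. In both cases $d$ induces $d_*:G\to\mathbb R_+$ with $d=d_*\circ\pi$. Metric structure (assuming $G$ is a finite topological graph): the vertex set $V$ consists of the points of degree $\neq 2$, the local maxima of $d_*$, and $\pi(r)$; the edges are the connected components of $G\setminus V$. Each edge, homeomorphic to an interval, is given length equal to the absolute difference of $d_*$ at its endpoints, the distance between two points $p,p'$ of the same edge being $|d_*(p)-d_*(p')|$; $d_G$ is the resulting metric-graph (shortest path) metric on $G$. *)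

From HB Require Import structures.
From mathcomp Require Import all_boot all_order all_algebra.
From mathcomp Require Import all_classical all_reals all_analysis.
From Stdlib Require Import Relations.
Set Implicit Arguments. Unset Strict Implicit. Unset Printing Implicit Defensive.
Import Order.TTheory GRing.Theory Num.Theory.
Import numFieldNormedType.Exports.
Local Open Scope classical_set_scope.
Local Open Scope ring_scope.

Record fin_graph (R : realType) (G : topologicalType) := FinGraph {
  fg_V : set G;
  fg_E : finType;
  fg_phi : fg_E -> R -> G }.
Arguments fg_V {R G} _ _.
Arguments fg_E {R G} _.
Arguments fg_phi {R G} _ _ _.

Section ReebDefs.
Context {R : realType}.

Definition geodesic_space (X : metricType R) : Prop :=
  forall x y : X, exists g : R -> X,
    g 0 = x /\ g (mdist x y) = y /\
    forall s t : R, 0 <= s <= mdist x y -> 0 <= t <= mdist x y ->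
      mdist (g s) (g t) = `|s - t|.

Definition same_path_comp {T : topologicalType} (A : set T) (x y : T) : Prop :=
  exists g : R -> T, {within `[0, 1], continuous g} /\ g 0 = x /\ g 1 = y /\
    forall t : R, 0 <= t <= 1 -> A (g t).

Definition reeb_rel {T : topologicalType} (d : T -> R) (x y : T) : Prop :=
  d x = d y /\ same_path_comp (d @^-1` [set d x]) x y.

Definition alpha_cover {T : Type} (d : T -> R) (alpha : R) (I : Type)
    (a b : I -> R) : Prop :=
  (forall i, a i < b i /\ b i - a i <= alpha) /\
  (forall x, exists i, a i < d x < b i).

Definition alpha_step {T : topologicalType} (d : T -> R) (I : Type)
    (a b : I -> R) (x y : T) : Prop :=
  d x = d y /\ exists i, same_path_comp (d @^-1` `]a i, b i[) x y.

Definition alpha_reeb_rel {T : topologicalType} (d : T -> R) (I : Type)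
    (a b : I -> R) : T -> T -> Prop :=
  clos_trans T (alpha_step d a b).

(* G with pi : X -> G is (up to homeomorphism) the quotient X / rel:
   pi is onto, identifies exactly rel-related points, and G carries the
   quotient topology. *)
Definition is_quotient {T G : topologicalType} (rel : T -> T -> Prop)
    (pi : T -> G) : Prop :=
  (forall q : G, exists x, pi x = q) /\
  (forall x y, pi x = pi y <-> rel x y) /\
  (forall U : set G, open U <-> open (pi @^-1` U)).

(* A finite (1-dimensional CW) graph structure on a Hausdorff space G:
   a finite set of vertices V0 and finitely many edges, each given by a
   continuous map [0,1] -> G, injective on ]0,1[, sending the endpoints
   into V0, with open edges pairwise disjoint and disjoint from V0, and
   covering G together with V0. *)

Definition is_fin_graph (G : topologicalType) (S : fin_graph R G) : Prop :=
  hausdorff_space G /\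
  finite_set (fg_V S) /\
  (forall e, {within `[0, 1], continuous (fg_phi S e)}) /\
  (forall e, fg_V S (fg_phi S e 0) /\ fg_V S (fg_phi S e 1)) /\
  (forall e s t, 0 < s < 1 -> 0 < t < 1 ->
       fg_phi S e s = fg_phi S e t -> s = t) /\
  (forall e s, 0 < s < 1 -> ~ fg_V S (fg_phi S e s)) /\
  (forall e e' s t, 0 < s < 1 -> 0 < t < 1 ->
       fg_phi S e s = fg_phi S e' t -> e = e') /\
  (forall p, fg_V S p \/ exists e s, 0 < s < 1 /\ fg_phi S e s = p).

Definition on_open_edge (G : topologicalType) (S : fin_graph R G) (p : G) : Prop :=
  exists e s, 0 < s < 1 /\ fg_phi S e s = p.

Definition graph_degree (G : topologicalType) (S : fin_graph R G) (p : G) : nat :=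
  (#|[set eb : (fg_E S * bool)%type |
        fg_phi S eb.1 (if eb.2 then 1%R else 0%R) == p]|
   + (if `[< on_open_edge S p >] then 2 else 0))%N.

Definition local_max {G : topologicalType} (f : G -> R) (p : G) : Prop :=
  exists U, nbhs p U /\ forall q, U q -> f q <= f p.

Definition reeb_vertices (G : topologicalType) (S : fin_graph R G)
    (dstar : G -> R) (pr : G) : set G :=
  [set p | graph_degree S p <> 2%N] `|` [set p | local_max dstar p] `|` [set pr].

Definition same_edge (G : topologicalType) (V : set G) (a b : G) : Prop :=
  exists x, ~ V x /\ closure (connected_component (~` V) x) a /\
                     closure (connected_component (~` V) x) b.

Fixpoint is_chain {G : Type} (adj : G -> G -> Prop) (x : G) (s : seq G) : Prop :=
  match s with
  | [::] => True
  | y :: s' => adj x y /\ is_chain adj y s'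
  end.

Fixpoint chain_length {G : Type} (dstar : G -> R) (x : G) (s : seq G) : R :=
  match s with
  | [::] => 0
  | y :: s' => `|dstar x - dstar y| + chain_length dstar y s'
  end.

(* shortest-path metric of the metric graph: infimum over chains
   p = x0, x1, ..., xn = q with consecutive points on a common edge,
   of the sum of the edge distances |d_*(x_i) - d_*(x_{i+1})|
   (+oo if there is no such chain) *)
Definition graph_dist (G : topologicalType) (S : fin_graph R G)
    (dstar : G -> R) (pr : G) (p q : G) : \bar R :=
  ereal_inf [set (chain_length dstar p s)%:E | s in
     [set s | is_chain (same_edge (reeb_vertices S dstar pr)) p s /\
              last p s = q]].

Fixpoint partition_sum {G : Type} (dist : G -> G -> \bar R) (delta : R -> G)
    (t0 : R) (ts : seq R) : \bar R :=
  match ts with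
  | [::] => 0%E
  | t :: ts' => (dist (delta t0) (delta t) + partition_sum dist delta t ts')%E
  end.

Definition path_length {G : Type} (dist : G -> G -> \bar R) (delta : R -> G)
    : \bar R :=
  ereal_sup [set partition_sum dist delta 0 ts | ts in
     [set ts : seq R | path <%R 0 ts /\ last 0 ts = 1]].

End ReebDefs.

From HB Require Import structures.
From mathcomp Require Import all_boot all_order all_algebra.
From mathcomp Require Import all_classical all_reals all_analysis.
From mathcomp Require Import ring lra.
Import Order.TTheory GRing.Theory Num.Theory.
Import numFieldNormedType.Exports.
Local Open Scope classical_set_scope.
Local Open Scope ring_scope.

(* Chains of points on common edges have
   length at least |d_*(p') - d_*(p)| by the triangle inequality.  Conversely, a
   path along which d_* strictly increases is injective and never passes through a
   local maximum of d_*, so it meets only finitely many vertices (those of the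
   finite graph structure and pi(r)); cut at these vertices, each open piece lies
   in one component of G \ V, and the resulting chain has length exactly
   d_*(p') - d_*(p). *)

Section SegmentImage.
Context {R : realType} {G : topologicalType} {delta : R -> G}.
Hypothesis delta_cont : {within `[0, 1], continuous delta}.

Lemma within_unit_ball_nbhs u (B : set G) : 0 <= u <= 1 -> nbhs (delta u) B ->
  exists2 e : R, 0 < e & forall w, 0 <= w <= 1 -> `|u - w| < e -> B (delta w).
Proof.
move=> u01 Bu.
have u01' : `[0, 1]%classic u by rewrite /= in_itv.
have := delta_cont u _ Bu; rewrite /= /nbhs /= -(nbhs_subspace_in u01') /within /=.
move=> /nbhs_ballP [e /= e0 He]; exists e => // w w01 uw.
by apply: He; rewrite /= ?in_itv.
Qed.

Lemma closure_image_oo_left s t : 0 <= s -> s < t -> t <= 1 ->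
  closure (delta @` [set` `]s, t[]) (delta s).
Proof.
move=> s0 st t1 B /within_unit_ball_nbhs [|e e0 He]; first (apply/andP; lra).
pose m := Num.min e (t - s).
have m0 : 0 < m by rewrite lt_min e0 subr_gt0.
have [me mt] : m <= e /\ m <= t - s by split; rewrite ge_min lexx ?orbT.
exists (delta (s + m / 2)); split.
  by exists (s + m / 2); rewrite //= in_itv /=; apply/andP; lra.
apply: He; first (apply/andP; lra).
rewrite opprD addrA subrr add0r normrN ger0_norm; lra.
Qed.

Lemma closure_image_oo_right s t : 0 <= s -> s < t -> t <= 1 ->
  closure (delta @` [set` `]s, t[]) (delta t).
Proof.
move=> s0 st t1 B /within_unit_ball_nbhs [|e e0 He]; first (apply/andP; lra).
pose m := Num.min e (t - s).
have m0 : 0 < m by rewrite lt_min e0 subr_gt0.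
have [me mt] : m <= e /\ m <= t - s by split; rewrite ge_min lexx ?orbT.
exists (delta (t - m / 2)); split.
  by exists (t - m / 2); rewrite //= in_itv /=; apply/andP; lra.
apply: He; first (apply/andP; lra).
have -> : t - (t - m / 2) = m / 2 by ring.
rewrite ger0_norm; lra.
Qed.

Lemma same_edge_segment (V : set G) s t : 0 <= s -> s < t -> t <= 1 ->
  (forall u, s < u < t -> ~ V (delta u)) -> same_edge V (delta s) (delta t).
Proof.
move=> s0 st t1 NV.
have mst : s < (s + t) / 2 < t by apply/andP; lra.
exists (delta ((s + t) / 2)); split; first exact: NV.
have sub_comp : delta @` [set` `]s, t[] `<=`
    connected_component (~` V) (delta ((s + t) / 2)).
  apply: connected_component_max.
  - by exists ((s + t) / 2); rewrite //= in_itv.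
  - by move=> _ [u /= + <-]; rewrite in_itv /= => /NV.
  - apply: connected_continuous_connected.
      by apply/connected_intervalP; exact: interval_is_interval.
    apply: continuous_subspaceW delta_cont => u /=.
    by rewrite !in_itv /= => /andP[? ?]; apply/andP; lra.
by split; apply: (closureS sub_comp);
  [exact: closure_image_oo_left | exact: closure_image_oo_right].
Qed.

End SegmentImage.

Lemma is_chain_cat {G : Type} (adj : G -> G -> Prop) x s1 s2 :
  is_chain adj x (s1 ++ s2) <-> is_chain adj x s1 /\ is_chain adj (last x s1) s2.
Proof.
elim: s1 x => [|y s1 IH] x /=; first by split => // -[].
by rewrite IH; split => [[? [? ?]] | [[? ?] ?]].
Qed.

Lemma chain_length_cat {R : realType} {G : Type} (f : G -> R) x s1 s2 :
  chain_length f x (s1 ++ s2) = chain_length f x s1 + chain_length f (last x s1) s2.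
Proof. by elim: s1 x => [|y s1 IH] x /=; rewrite ?add0r // IH addrA. Qed.

Lemma chain_length_ge_norm {R : realType} {G : Type} (f : G -> R) x s :
  `|f x - f (last x s)| <= chain_length f x s.
Proof.
elim: s x => [|y s IH] x /=; first by rewrite subrr normr0.
apply: le_trans (lerD (lexx _) (IH y)).
have -> : f x - f (last y s) = (f x - f y) + (f y - f (last y s)) by ring.
exact: ler_normD.
Qed.

Lemma path_lt_last {R : realType} (x : R) s : path <%R x s -> x <= last x s.
Proof.
elim: s x => [|y s IH] x //= /andP[xy /IH].
by apply: le_trans; exact: ltW.
Qed.

Lemma graph_degree_open_edge {R : realType} {G : topologicalType}
    {S : fin_graph R G} q :
  is_fin_graph S -> ~ fg_V S q -> graph_degree S q = 2%N.
Proof.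
move=> [_ [_ [_ [ends [_ [_ [_ cover]]]]]]] Nq.
have [//|[e [s [s01 es]]]] := cover q.
rewrite /graph_degree.
have -> : `[< on_open_edge S q >] = true by apply/asboolP; exists e, s.
suff -> : #|[set eb : (fg_E S * bool)%type |
        fg_phi S eb.1 (if eb.2 then 1%R else 0%R) == q]| = 0%N by [].
apply: eq_card0 => -[e' b]; rewrite /in_mem /=.
apply/negbTE/asboolPn => /= /eqP E; apply: Nq; rewrite -E.
by case: b {E}; case: (ends e').
Qed.

Section GraphDist.
Context {R : realType} {G : topologicalType} (S : fin_graph R G) (dstar : G -> R)
  (pr : G).
Hypothesis S_graph : is_fin_graph S.

Local Notation V := (reeb_vertices S dstar pr).

Lemma reeb_vertex_not_max q :
  V q -> ~ local_max dstar q -> fg_V S q \/ q = pr.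
Proof.
case=> [[/= deg|//]|->]; last by right.
by left; apply: contrapT => /(graph_degree_open_edge _ S_graph).
Qed.

Lemma graph_dist_ge x y : ((dstar y - dstar x)%:E <= graph_dist S dstar pr x y)%E.
Proof.
apply: le_ereal_inf_tmp => _ [c [_ <-] <-]; rewrite lee_fin.
by apply: le_trans (chain_length_ge_norm _ _ c); rewrite distrC ler_norm.
Qed.

Definition ascending_chain (x y : G) : Prop :=
  exists c, is_chain (same_edge V) x c /\ last x c = y /\
    chain_length dstar x c = dstar y - dstar x.

Lemma ascending_chain_same_edge x y :
  same_edge V x y -> dstar x <= dstar y -> ascending_chain x y.
Proof.
move=> xy le_xy; exists [:: y]; split=> //=; split=> //.
by rewrite addr0 distrC ger0_norm // subr_ge0.
Qed.

Lemma ascending_chain_trans x y z :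
  ascending_chain x y -> ascending_chain y z -> ascending_chain x z.
Proof.
move=> [c1 [ch1 [<- len1]]] [c2 [ch2 [<- len2]]].
exists (c1 ++ c2); split; first exact/is_chain_cat.
by rewrite last_cat chain_length_cat len1 len2; split=> //; ring.
Qed.

Lemma graph_dist_ascending x y :
  ascending_chain x y -> graph_dist S dstar pr x y = (dstar y - dstar x)%:E.
Proof.
move=> [c [ch [last_c len]]]; apply/le_anti; rewrite graph_dist_ge andbT.
by apply: ereal_inf_lbound; exists c; rewrite ?len.
Qed.

Section IncreasingPath.
Variable delta : R -> G.
Hypothesis delta_cont : {within `[0, 1], continuous delta}.
Hypothesis delta_incr : forall s t : R, 0 <= s -> s < t -> t <= 1 ->
  dstar (delta s) < dstar (delta t).

Lemma increasing_path_inj s t : 0 <= s -> s < t -> t <= 1 -> delta s <> delta t.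
Proof. by move=> s0 st t1 E; have := delta_incr _ _ s0 st t1; rewrite E ltxx. Qed.

Lemma increasing_path_vertex u : 0 <= u -> u < 1 -> V (delta u) ->
  fg_V S (delta u) \/ delta u = pr.
Proof.
move=> u0 u1 /reeb_vertex_not_max; apply=> -[U [Uu U_le]].
have [_ [[w /andP[uw w1] <-] /U_le]] :=
  closure_image_oo_left delta_cont _ _ u0 u1 (lexx _) _ Uu.
by rewrite leNgt delta_incr ?(ltW w1).
Qed.

(* If the head of [l] is met at some u, cut ]s, t[ at u: by injectivity it is
   met in neither half. *)
Lemma ascending_chain_segment (l : seq G) s t : 0 <= s -> s < t -> t <= 1 ->
  (forall u, s < u < t -> V (delta u) -> delta u \in l) ->
  ascending_chain (delta s) (delta t).
Proof.
elim: l s t => [|y l IH] s t s0 st t1 l_vert.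
  apply: ascending_chain_same_edge; last exact/ltW/delta_incr.
  by apply: same_edge_segment => // u su /(l_vert u su).
have [[u [/andP[su ut] [Vu uy]]]|no_y] :=
  pselect (exists u, s < u < t /\ V (delta u) /\ delta u = y); last first.
  apply: IH => // u su Vu; move: (l_vert u su Vu); rewrite in_cons.
  by case/orP=> [/eqP uy|//]; case: no_y; exists u.
have [u0 u1] : 0 <= u /\ u <= 1 by split; lra.
apply: (@ascending_chain_trans _ (delta u)); apply: IH => // w /andP[lw wr] Vw;
  (have /l_vert/(_ Vw) : s < w < t by apply/andP; lra);
  rewrite in_cons -uy => /orP[/eqP wu|//]; exfalso.
- by apply: (@increasing_path_inj w u) => //; lra.
- by apply: (@increasing_path_inj u w) => //; lra.
Qed.

Lemma graph_dist_increasing_path s t : 0 <= s -> s < t -> t <= 1 ->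
  graph_dist S dstar pr (delta s) (delta t) = (dstar (delta t) - dstar (delta s))%:E.
Proof.
move=> s0 st t1; apply: graph_dist_ascending.
have [_ [finV _]] := S_graph.
have [lV lV_V] := (finite_seqP (fg_V S)).1 finV.
apply: (@ascending_chain_segment (pr :: lV)) => // u /andP[su ut] Vu.
have [|->] := increasing_path_vertex _ (le_trans s0 (ltW su)) (lt_le_trans ut t1) Vu.
  by rewrite in_cons lV_V => ->; rewrite orbT.
exact: mem_head.
Qed.

Lemma partition_sum_increasing_path ts t0 : 0 <= t0 -> path <%R t0 ts ->
  last t0 ts = 1 ->
  partition_sum (graph_dist S dstar pr) delta t0 ts =
    (dstar (delta 1) - dstar (delta t0))%:E.
Proof.
elim: ts t0 => [|t ts IH] t0 t0_ge0 /=; first by move=> _ ->; rewrite subrr.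
move=> /andP[t0t t_path] last_ts.
have t1 : t <= 1 by rewrite -last_ts; exact: path_lt_last.
rewrite graph_dist_increasing_path // IH //; last exact: le_trans t0_ge0 (ltW t0t).
by rewrite -EFinD; congr (_%:E); ring.
Qed.

Lemma path_length_increasing_path :
  path_length (graph_dist S dstar pr) delta = (dstar (delta 1) - dstar (delta 0))%:E.
Proof.
rewrite /path_length; set sums := (X in ereal_sup X).
suff -> : sums = [set (dstar (delta 1) - dstar (delta 0))%:E] by exact: ereal_sup1.
apply/seteqP; split=> [_ [ts [ts_path ts_last] <-]|_ ->] /=.
  exact: partition_sum_increasing_path.
exists [:: 1]; first by rewrite /= ltr01.
by rewrite partition_sum_increasing_path //= ltr01.
Qed.

End IncreasingPath.
End GraphDist.

Theorem lemma1 (R : realType) (X : metricType R) (r : X)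
  (G : topologicalType) (pi : X -> G) (dstar : G -> R) (S : fin_graph R G) :
  compact [set: X] ->
  geodesic_space X ->
  (is_quotient (reeb_rel (fun x => mdist r x)) pi \/
   exists (alpha : R) (I : Type) (a b : I -> R),
     0 < alpha /\ alpha_cover (fun x => mdist r x) alpha a b /\
     is_quotient (alpha_reeb_rel (fun x => mdist r x) a b) pi) ->
  (forall x : X, mdist r x = dstar (pi x)) ->
  is_fin_graph S ->
  forall (delta : R -> G) (p p' : G),
    {within `[0, 1], continuous delta} ->
    delta 0 = p -> delta 1 = p' ->
    (forall s t : R, 0 <= s -> s < t -> t <= 1 ->
       dstar (delta s) < dstar (delta t)) ->
    path_length (graph_dist S dstar (pi r)) delta = graph_dist S dstar (pi r) p p'
    /\ graph_dist S dstar (pi r) p p' = (dstar p' - dstar p)%:E.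
Proof.
move=> _ _ _ _ S_graph delta p p' delta_cont <- <- delta_incr.
have E : graph_dist S dstar (pi r) (delta 0) (delta 1) =
    (dstar (delta 1) - dstar (delta 0))%:E.
  exact: graph_dist_increasing_path (lexx 0) ltr01 (lexx 1).
by rewrite path_length_increasing_path // E.
Qed.
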